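(* Consider a Fisher market with $n$ buyers and $m$ items, each item having supply $1$. Buyer $i$ has budget $B_i \ge 0$, valuations $v_{ij} \ge 0$ for items $j=1,\dots,m$, and a hard demand $d_i \ge 0$. For an allocation $x=(x_{ij}) \in \mathbb{R}^{n\times m}_{\ge 0}$ write $u_i = \sum_j v_{ij}x_{ij} - d_i$. Assume there exists an allocation $x \ge 0$ with $\sum_i x_{ij}\le 1$ for all $j$ and $u_i>0$ for all $i$. Consider the convex program $$\max_{x\ge 0} \sum_i B_i \log\Big(\sum_j v_{ij}x_{ij} - d_i\Big) \quad \text{s.t.}\quad \sum_i x_{ij}\le 1 \ \ \forall j=1,\dots,m.$$ Let $x$ be an optimal solution and let $p=(p_j)_j \ge 0$ be the optimal dual variables (prices) associated with the supply constraints $\sum_i x_{ij}\le 1$, so that $x$, $p$ and multipliers for the constraints $x\ge 0$ satisfy the KKT conditions. Then for every buyer $i$, $$B_i\Big(1+\frac{d_i}{u_i}\Big) = \sum_j p_j x_{ij}.$$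
   Context: This is the ''Fisher market with hard demands'' setting: buyer $i$'s utility from bundle $x_i$ is $u_i(x_i)=\sum_j v_{ij}x_{ij}-d_i$, and the program maximizes the budget-weighted sum of logarithms of these utilities subject to unit supplies. *)

From HB Require Import structures.
From mathcomp Require Import all_boot all_order all_algebra.
From mathcomp Require Import reals exp.
Set Implicit Arguments. Unset Strict Implicit. Unset Printing Implicit Defensive.
Import Order.TTheory GRing.Theory Num.Theory.
Local Open Scope ring_scope.

Section Fisher.
Variables (R : realType) (n m : nat).
Variables (B d : 'I_n -> R) (v : 'I_n -> 'I_m -> R).

Definition util (x : 'I_n -> 'I_m -> R) (i : 'I_n) : R :=
  \sum_(j < m) v i j * x i j - d i.

Definition feasible (x : 'I_n -> 'I_m -> R) : Prop :=
  (forall i j, 0 <= x i j) /\ (forall j, \sum_(i < n) x i j <= 1).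

Definition in_domain (x : 'I_n -> 'I_m -> R) : Prop :=
  forall i, 0 < util x i.

Definition objective (x : 'I_n -> 'I_m -> R) : R :=
  \sum_(i < n) B i * ln (util x i).

Definition optimal (x : 'I_n -> 'I_m -> R) : Prop :=
  feasible x /\ in_domain x /\
  forall y, feasible y -> in_domain y -> objective y <= objective x.

(* KKT conditions for
     max sum_i B_i log(u_i(x))  s.t.  sum_i x_ij - 1 <= 0 (multiplier p_j),
                                      -x_ij <= 0        (multiplier mu_ij). *)
Definition KKT (x : 'I_n -> 'I_m -> R) (p : 'I_m -> R)
    (mu : 'I_n -> 'I_m -> R) : Prop :=
  [/\ feasible x, in_domain x,
      (forall j, 0 <= p j) /\ (forall i j, 0 <= mu i j),
      (* stationarity: d/dx_ij of the Lagrangian vanishes *)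
      (forall i j, B i * v i j / util x i - p j + mu i j = 0) &
      (forall j, p j * (\sum_(i < n) x i j - 1) = 0) /\
      (forall i j, mu i j * x i j = 0)].

End Fisher.

(* Stationarity gives p_j = B_i v_ij / u_i + mu_ij, and complementary slackness
   kills mu_ij x_ij, so buyer i spends p_j x_ij = (B_i / u_i) v_ij x_ij on item j.
   Summing over j, the total spending is (B_i / u_i) (u_i + d_i).  Only the KKT
   system is used: optimality, the Slater point and the sign conditions are what
   guarantee that such multipliers exist, but the identity itself does not need them. *)
From HB Require Import structures.
From mathcomp Require Import all_boot all_order all_algebra.
From mathcomp Require Import reals exp.
From mathcomp Require Import ring lra.
Set Implicit Arguments. Unset Strict Implicit. Unset Printing Implicit Defensive.
Import Order.TTheory GRing.Theory Num.Theory.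
Local Open Scope ring_scope.

Section KKTSpending.
Variables (R : realType) (n m : nat).
Variables (B d : 'I_n -> R) (v : 'I_n -> 'I_m -> R).
Variables (x : 'I_n -> 'I_m -> R) (p : 'I_m -> R) (mu : 'I_n -> 'I_m -> R).
Hypothesis hkkt : KKT B d v x p mu.

Lemma sum_valuation_util (i : 'I_n) :
  \sum_(j < m) v i j * x i j = util d v x i + d i.
Proof. by rewrite /util subrK. Qed.

Lemma KKT_item_spending (i : 'I_n) (j : 'I_m) :
  p j * x i j = B i / util d v x i * (v i j * x i j).
Proof.
case: hkkt => _ _ _ hstat [_ hmu].
have -> : p j = B i * v i j / util d v x i + mu i j by have := hstat i j; lra.
by rewrite mulrDl hmu addr0; ring.
Qed.

Lemma KKT_spending (i : 'I_n) :
  \sum_(j < m) p j * x i j = B i / util d v x i * (util d v x i + d i).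
Proof.
rewrite -sum_valuation_util mulr_sumr.
by apply: eq_bigr => j _; exact: KKT_item_spending.
Qed.

End KKTSpending.

Theorem lemma1 (R : realType) (n m : nat)
  (B d : 'I_n -> R) (v : 'I_n -> 'I_m -> R)
  (hB : forall i, 0 <= B i) (hd : forall i, 0 <= d i)
  (hv : forall i j, 0 <= v i j)
  (slater : exists x0, feasible x0 /\ in_domain d v x0)
  (x : 'I_n -> 'I_m -> R) (p : 'I_m -> R) (mu : 'I_n -> 'I_m -> R)
  (hopt : optimal B d v x)
  (hkkt : KKT B d v x p mu) :
  forall i : 'I_n,
    B i * (1 + d i / util d v x i) = \sum_(j < m) p j * x i j.
Proof.
move=> i; rewrite (KKT_spending hkkt).
have util_neq0 : util d v x i != 0.
  by case: hkkt => _ hdom _ _ _; rewrite gt_eqF.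
by field.
Qed.
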